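(* Under Assumption 1, for every $t\in\{0,1,\dots,T\}$, every risk-aversion vector $\beta$, and every $r\in\mathcal R$, the map $p\mapsto V_{t,T}(r,p\,|\,\beta)$ is Lipschitz continuous on $\mathbb R$.
   Context: Model (dynamic EV charging). Fix a horizon $T\in\{1,2,\dots\}$, a battery capacity $R_{\max}>0$, a maximal charge per period $x_{\max}>0$, an initial charge $R_0\in[0,R_{\max}]$, an access fee $c_f\in\mathbb R$, a reference price $p_{\mathrm{ref}}>0$, a constant $\gamma_h\ge 0$, a deterministic seasonality function $g:\mathbb R\to\mathbb R$, and price parameters $\kappa_Y>0$, $\mu_Y\in\mathbb R$, $\sigma_Y>0$, $\lambda_J\in(0,1)$, $\mu_J\in\mathbb R$, $\sigma_J>0$. Spot prices are $P_t=g(t)+Y_t$ with $Y_{t+1}=Y_te^{-\kappa_Y}+\mu_Y(1-e^{-\kappa_Y})+\xi_{t+1}+X_{t+1}J_{t+1}$, where $(\xi_t)$ are i.i.d. $\mathcal N\big(0,\sigma_Y^2(1-e^{-2\kappa_Y})/(2\kappa_Y)\big)$, $(X_t)$ are i.i.d. Bernoulli$(\lambda_J)$, $(J_t)$ are i.i.d. $\mathcal N(\mu_J,\sigma_J^2)$, all mutually independent. Define $\psi_{t+1}=g(t+1)-g(t)e^{-\kappa_Y}+\mu_Y(1-e^{-\kappa_Y})+\xi_{t+1}+X_{t+1}J_{t+1}$ and $\psi_{t+1,Y}=\psi_{t+1}-g(t+1)$ (so given $P_t=p$, $P_{t+1}$ has the law of $pe^{-\kappa_Y}+\psi_{t+1}$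 and $Y_{t+1}$ that of $pe^{-\kappa_Y}+\psi_{t+1,Y}$). Let $\mathcal R=[0,R_{\max}]$, $\mathcal X(r)=[0,\min\{R_{\max}-r,x_{\max}\}]$, and shortage $h(r)=\min\{R_0+Tx_{\max},R_{\max}\}-r$. Let $\gamma_Y:\mathbb R\to(0,\infty)$ be a compensation function. Assumption 1: $\gamma_Y$ is positive, strictly increasing, and $L_{\gamma_Y}$-Lipschitz continuous with $L_{\gamma_Y}\le p_{\mathrm{ref}}^{-1}e^{2\kappa_Y}$. Risk measures. For $\alpha\in(0,1)$: $\mathrm{VaR}_\alpha(X)=\inf\{u:\mathbf P(X\le u)>\alpha\}$, $\mathrm{CVaR}_\alpha(X)=\inf_u\{u+(1-\alpha)^{-1}\mathbf E[(X-u)^+]\}$. For $\beta_t=(\lambda_t,\alpha_t)\in[0,1]\times(0,1)$, $\rho_{\beta_t}(X)=(1-\lambda_t)\mathbf E[X]+\lambda_t\mathrm{CVaR}_{\alpha_t}(X)$. A risk-aversion vector is $\beta=(\lambda_0,\alpha_0,\dots,\lambda_T,\alpha_T)$. Value functions. For $r\in\mathcal R$, $p\in\mathbb R$: $V_{T,T}(r,p\,|\,\beta)=\rho_{\beta_T}\big[\big(1+\gamma_h h(r)+\gamma_Y(pe^{-\kappa_Y}+\psi_{T+1,Y})\big)h(r)p_{\mathrm{ref}}\big]$, and for $t=T-1,\dots,0$: $\tilde V_{t,T}(r,p\,|\,\beta)=\rho_{\beta_t}\big[V_{t+1,T}(r,pe^{-\kappa_Y}+\psi_{t+1}\,|\,\beta)\big]$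 (post-decision value function) and $V_{t,T}(r,p\,|\,\beta)=\min_{x\in\mathcal X(r)}\{xp-c_f+\tilde V_{t,T}(r+x,p\,|\,\beta)\}$. *)

From Stdlib Require Import Reals Lra ClassicalEpsilon.
Open Scope R_scope.

Definition choose (P : R -> Prop) (d : R) : R :=
  match excluded_middle_informative (exists x, P x) with
  | left H => proj1_sig (constructive_indefinite_description _ H)
  | right _ => d
  end.

Definition is_glb (E : R -> Prop) (m : R) : Prop :=
  (forall x, E x -> m <= x) /\ (forall b, (forall x, E x -> b <= x) -> b <= m).

(* infimum (the glb; all infima used below are finite) *)
Definition Rinf (E : R -> Prop) : R := choose (is_glb E) 0.

Definition Rint (f : R -> R) (a b : R) : R :=
  choose (fun v => exists pr : Riemann_integrable f a b, RiemannInt pr = v) 0.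

Definition Iline (f : R -> R) : R :=
  choose (fun l => Un_cv (fun n => Rint f (- INR n) (INR n)) l) 0.

Definition gauss (m v x : R) : R :=
  exp (- (x - m) ^ 2 / (2 * v)) / sqrt (2 * PI * v).

Record model := Model {
  T : nat; Rcap : R; xmax : R; Rinit : R; cf : R; pref : R; gh : R;
  g : R -> R; kY : R; muY : R; sY : R; lJ : R; muJ : R; sJ : R;
  gY : R -> R }.

Section Model.
Variable M : model.

(* variance of xi_t *)
Definition var_xi : R := sY M ^ 2 * (1 - exp (- 2 * kY M)) / (2 * kY M).

(* E[ h(xi + X J) ], xi ~ N(0,var_xi), X ~ Bernoulli(lJ), J ~ N(muJ, sJ^2),
   all independent *)
Definition EZ (h : R -> R) : R :=
  (1 - lJ M) * Iline (fun x => h x * gauss 0 var_xi x)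
  + lJ M * Iline (fun x => gauss 0 var_xi x *
                 Iline (fun j => h (x + j) * gauss (muJ M) (sJ M ^ 2) j)).

Definition CVaR (a : R) (h : R -> R) : R :=
  Rinf (fun w => exists u, w = u + / (1 - a) * EZ (fun z => Rmax (h z - u) 0)).

Definition rho (lam a : R) (h : R -> R) : R :=
  (1 - lam) * EZ h + lam * CVaR a h.

(* deterministic part of psi_{t+1}:  psi_{t+1} = adet t + xi_{t+1} + X_{t+1} J_{t+1} *)
Definition adet (t : nat) : R :=
  g M (INR t + 1) - g M (INR t) * exp (- kY M) + muY M * (1 - exp (- kY M)).

Definition shortage (r : R) : R := Rmin (Rinit M + INR (T M) * xmax M) (Rcap M) - r.

(* Value functions; Vn lam alp n = V_{T-n,T}( . , . | beta) where
   beta = (lam 0, alp 0, ..., lam T, alp T). *)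
Fixpoint Vn (lam alp : nat -> R) (n : nat) : R -> R -> R :=
  match n with
  | O => fun r p =>
      rho (lam (T M)) (alp (T M)) (fun z =>
        (1 + gh M * shortage r
           + gY M (p * exp (- kY M) + (adet (T M) - g M (INR (T M) + 1)) + z))
        * shortage r * pref M)
  | S k => fun r p =>
      let t := (T M - S k)%nat in
      Rinf (fun w => exists x, 0 <= x <= Rmin (Rcap M - r) (xmax M) /\
        w = x * p - cf M
            + rho (lam t) (alp t)
                (fun z => Vn lam alp k (r + x) (p * exp (- kY M) + adet t + z)))
  end.

Definition V (lam alp : nat -> R) (t : nat) (r p : R) : R :=
  Vn lam alp (T M - t) r p.

End Model.

(* By backward induction on the stage, [p ↦ V_t(r, p)] is Lipschitz with a
   constant uniform in [r ∈ [0, R_max]].  Every stage applies the risk measure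
   ρ to a function of [p e^{-κ_Y} + c + Z], and ρ is Lipschitz for the sup
   distance: the expectation is built from Gaussian integrals, which are
   Lipschitz for domination by a Gaussian density (whose mass on any interval
   is at most √π), and CVaR is an infimum over [u] of such expectations of the
   1-Lipschitz excess [(· - u)^+].  At the terminal stage the integrand is
   Lipschitz because γ_Y is and the shortage is bounded; at the other stages
   the cost [x p] adds [x_max] to the constant, and an infimum of uniformly
   Lipschitz functions is Lipschitz. *)
From Stdlib Require Import Reals Lra ClassicalEpsilon Classical FunctionalExtensionality.
From Coquelicot Require Import Coquelicot.
Open Scope R_scope.

Definition lipschitz (f : R -> R) (L : R) : Prop :=
  forall x y, Rabs (f x - f y) <= L * Rabs (x - y).

Lemma lipschitz_nonneg f L : lipschitz f L -> 0 <= L.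
Proof.
  intros H. specialize (H 1 0).
  rewrite Rminus_0_r, Rabs_R1, Rmult_1_r in H.
  pose proof (Rabs_pos (f 1 - f 0)). lra.
Qed.

Lemma lipschitz_le f L L' : lipschitz f L -> L <= L' -> lipschitz f L'.
Proof.
  intros H HL x y. specialize (H x y). pose proof (Rabs_pos (x - y)). nra.
Qed.

Lemma lipschitz_shift f L c : lipschitz f L -> lipschitz (fun y => f (c + y)) L.
Proof.
  intros H x y. replace (x - y) with ((c + x) - (c + y)) by ring. apply H.
Qed.

Lemma lipschitz_continuous f L x : lipschitz f L -> continuous f x.
Proof.
  intros H. apply continuity_pt_filterlim.
  intros eps Heps. pose proof (lipschitz_nonneg f L H).
  exists (eps / (L + 1)). split.
  - apply Rdiv_lt_0_compat; lra.
  - intros y [_ Hy]. simpl in *. unfold R_dist in *.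
    assert (Rabs (y - x) * (L + 1) < eps).
    { apply (Rmult_lt_compat_r (L + 1)) in Hy; [|lra].
      replace (eps / (L + 1) * (L + 1)) with eps in Hy by (field; lra). lra. }
    pose proof (H y x). pose proof (Rabs_pos (y - x)). nra.
Qed.

Lemma Rmax0_dist_le a b : Rabs (Rmax a 0 - Rmax b 0) <= Rabs (a - b).
Proof.
  unfold Rmax; destruct Rle_dec; destruct Rle_dec; unfold Rabs;
    repeat destruct Rcase_abs; lra.
Qed.

Lemma lipschitz_excess h L u : lipschitz h L -> lipschitz (fun z => Rmax (h z - u) 0) L.
Proof.
  intros H x y. eapply Rle_trans; [apply Rmax0_dist_le|].
  replace (h x - u - (h y - u)) with (h x - h y) by ring. apply H.
Qed.

Lemma Rinf_glb E : (exists m, is_glb E m) -> is_glb E (Rinf E).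
Proof.
  intros H. unfold Rinf, choose.
  destruct excluded_middle_informative as [H'|H']; [|contradiction].
  destruct constructive_indefinite_description; auto.
Qed.

Lemma Rinf_default E : ~ (exists m, is_glb E m) -> Rinf E = 0.
Proof.
  intros H. unfold Rinf, choose.
  destruct excluded_middle_informative; [contradiction|reflexivity].
Qed.

Lemma glb_exists E : (exists x, E x) -> (exists b, forall x, E x -> b <= x) ->
  exists m, is_glb E m.
Proof.
  intros [x0 Hx0] [b Hb].
  destruct (completeness (fun y => E (- y))) as [l [Hl1 Hl2]].
  - exists (- b). intros y Hy. apply Hb in Hy. lra.
  - exists (- x0). rewrite Ropp_involutive; auto.
  - exists (- l). split.
    + intros x Hx.
      assert (- x <= l) by (apply Hl1; rewrite Ropp_involutive; auto). lra.
    + intros c Hc.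
      assert (l <= - c) by (apply Hl2; intros y Hy; specialize (Hc _ Hy); lra). lra.
Qed.

(* Either both infima exist, or both are the junk value [0]. *)
Lemma Rinf_dist_le E1 E2 D : 0 <= D -> (exists x, E1 x) -> (exists x, E2 x) ->
  (forall w1, E1 w1 -> exists w2, E2 w2 /\ w2 <= w1 + D) ->
  (forall w2, E2 w2 -> exists w1, E1 w1 /\ w1 <= w2 + D) ->
  Rabs (Rinf E1 - Rinf E2) <= D.
Proof.
  intros HD Hn1 Hn2 H12 H21.
  assert (Heq : (exists m, is_glb E1 m) <-> (exists m, is_glb E2 m)).
  { split; intros [m [Hm _]]; apply glb_exists; auto; exists (m - D); intros w Hw.
    - destruct (H21 w Hw) as [w1 [Hw1 Hle]]. specialize (Hm _ Hw1). lra.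
    - destruct (H12 w Hw) as [w1 [Hw1 Hle]]. specialize (Hm _ Hw1). lra. }
  destruct (classic (exists m, is_glb E1 m)) as [He|He].
  - destruct (Rinf_glb _ He) as [A1 A2].
    destruct (Rinf_glb _ (proj1 Heq He)) as [B1 B2].
    apply Rabs_le; split.
    + enough (Rinf E2 - D <= Rinf E1) by lra. apply A2. intros w1 Hw1.
      destruct (H12 w1 Hw1) as [w2 [Hw2 Hle]]. specialize (B1 _ Hw2). lra.
    + enough (Rinf E1 - D <= Rinf E2) by lra. apply B2. intros w2 Hw2.
      destruct (H21 w2 Hw2) as [w1 [Hw1 Hle]]. specialize (A1 _ Hw1). lra.
  - rewrite !Rinf_default; [rewrite Rminus_diag, Rabs_R0; auto| |auto].
    intros H; apply He, Heq, H.
Qed.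

Lemma Rinf_lipschitz (P : R -> Prop) (F : R -> R -> R) L :
  (exists x, P x) -> (forall x, P x -> lipschitz (fun p => F p x) L) ->
  lipschitz (fun p => Rinf (fun w => exists x, P x /\ w = F p x)) L.
Proof.
  intros [x0 Hx0] HF p q.
  pose proof (lipschitz_nonneg _ _ (HF x0 Hx0)).
  apply Rinf_dist_le.
  - pose proof (Rabs_pos (p - q)). nra.
  - eexists; exists x0; eauto.
  - eexists; exists x0; eauto.
  - intros w [x [Hx ->]]. exists (F q x). split; [exists x; auto|].
    specialize (HF x Hx p q). apply Rabs_le_between in HF. lra.
  - intros w [x [Hx ->]]. exists (F p x). split; [exists x; auto|].
    specialize (HF x Hx p q). apply Rabs_le_between in HF. lra.
Qed.

Lemma Rint_RInt f a b : ex_RInt f a b -> Rint f a b = RInt f a b.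
Proof.
  intros Hex. unfold Rint, choose.
  destruct excluded_middle_informative as [H|H].
  - destruct constructive_indefinite_description as [v [pr Hv]]; simpl.
    rewrite <- Hv. symmetry. apply RInt_Reals.
  - exfalso. apply H. exists (RiemannInt (ex_RInt_Reals_0 _ _ _ Hex)).
    eexists; reflexivity.
Qed.

Lemma Iline_lim f l : Un_cv (fun n => Rint f (- INR n) (INR n)) l -> Iline f = l.
Proof.
  intros Hl. unfold Iline, choose.
  destruct excluded_middle_informative as [H|H]; [|exfalso; eauto].
  destruct constructive_indefinite_description as [v Hv]; simpl.
  eapply UL_sequence; eauto.
Qed.

Lemma Iline_default f :
  (forall l, ~ Un_cv (fun n => Rint f (- INR n) (INR n)) l) -> Iline f = 0.
Proof.
  intros Hl. unfold Iline, choose.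
  destruct excluded_middle_informative as [[l H]|H]; [exfalso; eapply Hl, H|auto].
Qed.

Lemma Un_cv_le_abs u l K : Un_cv u l -> (forall n, Rabs (u n) <= K) -> Rabs l <= K.
Proof.
  intros Hu HK. destruct (Rle_or_lt (Rabs l) K) as [|Hlt]; auto.
  destruct (Hu (Rabs l - K)) as [N HN]; [lra|].
  specialize (HN N (le_n N)). unfold R_dist in HN. specialize (HK N).
  pose proof (Rabs_triang_inv l (u N)). rewrite Rabs_minus_sym in HN. lra.
Qed.

(* If the truncated integrals of [f1 - f2] converge, then [f1] and [f2] are
   either both improperly integrable or both get the junk value [0]. *)
Lemma Iline_dist_le_of_cv f1 f2 K :
  (forall n, Rabs (Rint f1 (- INR n) (INR n) - Rint f2 (- INR n) (INR n)) <= K) ->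
  (exists l, Un_cv (fun n => Rint f1 (- INR n) (INR n) - Rint f2 (- INR n) (INR n)) l) ->
  Rabs (Iline f1 - Iline f2) <= K.
Proof.
  intros HK [l Hl].
  set (A := fun n => Rint f1 (- INR n) (INR n)) in *.
  set (B := fun n => Rint f2 (- INR n) (INR n)) in *.
  pose proof (Un_cv_le_abs _ _ _ Hl HK) as Hlk.
  destruct (classic (exists a, Un_cv A a)) as [[a Ha]|Hna].
  - assert (HB : Un_cv B (a - l)).
    { apply (Un_cv_ext (fun n => A n - (A n - B n))); [intros; ring|].
      exact (CV_minus A _ _ _ Ha Hl). }
    rewrite (Iline_lim f1 a Ha), (Iline_lim f2 (a - l) HB).
    replace (a - (a - l)) with l by ring. exact Hlk.
  - assert (HB : forall b, ~ Un_cv B b).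
    { intros b Hb. apply Hna. exists (b + l).
      apply (Un_cv_ext (fun n => B n + (A n - B n))); [intros; ring|].
      exact (CV_plus B _ _ _ Hb Hl). }
    rewrite (Iline_default f1), (Iline_default f2); auto.
    + rewrite Rminus_diag, Rabs_R0. pose proof (Rabs_pos l). lra.
    + intros a Ha. apply Hna. exists a. exact Ha.
Qed.

Lemma RInt_sym_growing (phi : R -> R) : (forall x, continuous phi x) -> (forall x, 0 <= phi x) ->
  Un_growing (fun n => RInt phi (- INR n) (INR n)).
Proof.
  intros Hc Hp n. rewrite S_INR.
  assert (Hex : forall a b, ex_RInt phi a b)
    by (intros; apply (ex_RInt_continuous (V := R_CompleteNormedModule)); auto).
  rewrite <- (RInt_Chasles phi (- (INR n + 1)) (- INR n) (INR n + 1)),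
    <- (RInt_Chasles phi (- INR n) (INR n) (INR n + 1)); auto.
  assert (0 <= RInt phi (- (INR n + 1)) (- INR n)) by (apply RInt_ge_0; auto; lra).
  assert (0 <= RInt phi (INR n) (INR n + 1)) by (apply RInt_ge_0; auto; lra).
  simpl. unfold plus; simpl. lra.
Qed.

Lemma gauss_pos m v x : 0 < v -> 0 < gauss m v x.
Proof.
  intros Hv. unfold gauss. apply Rdiv_lt_0_compat; [apply exp_pos|].
  apply sqrt_lt_R0. pose proof PI_RGT_0. nra.
Qed.

Lemma gauss_continuous m v x : 0 < v -> continuous (gauss m v) x.
Proof.
  intros Hv. apply (ex_derive_continuous (gauss m v)). unfold gauss. auto_derive; auto.
Qed.

(* [exp (- y) <= 1 / (1 + y)] dominates the density by a Cauchy density,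
   whose antiderivative is an [atan]. *)
Lemma RInt_gauss_le m v a b : 0 < v -> a <= b -> RInt (gauss m v) a b <= sqrt PI.
Proof.
  intros Hv Hab. pose proof PI_RGT_0.
  set (s := sqrt (2 * v)). set (k := / sqrt (2 * PI * v)).
  assert (Hs : 0 < s) by (apply sqrt_lt_R0; lra).
  assert (Hs2 : s * s = 2 * v) by (apply sqrt_sqrt; lra).
  assert (Hk : 0 < k) by (apply Rinv_0_lt_compat, sqrt_lt_R0; nra).
  assert (Hks : k * s * PI = sqrt PI).
  { unfold k. replace (2 * PI * v) with (PI * (2 * v)) by ring.
    rewrite sqrt_mult by lra. fold s.
    pose proof (sqrt_lt_R0 PI H). pose proof (sqrt_sqrt PI).
    rewrite <- (sqrt_sqrt PI) at 2 by lra. field. lra. }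
  set (phi := fun x => k / (1 + ((x - m) / s) ^ 2)).
  set (Phi := fun x => k * s * atan ((x - m) / s)).
  assert (HI : is_RInt phi a b (minus (Phi b) (Phi a))).
  { apply (is_RInt_derive Phi phi).
    - intros x _. unfold Phi, phi.
      replace (k / (1 + ((x - m) / s) ^ 2))
        with (k * s * (scal (/ s) (/ (1 + ((x - m) / s) ^ 2)))).
      2:{ unfold scal; simpl; unfold mult; simpl.
          field. split; [lra|]. pose proof (Rle_0_sqr (x - m)). unfold Rsqr in *. nra. }
      apply (is_derive_scal (fun x => atan ((x - m) / s))).
      apply (is_derive_comp atan (fun x => (x - m) / s)).
      + apply is_derive_Reals, derivable_pt_lim_atan.
      + auto_derive; auto. field; lra.
    - intros x _. apply (ex_derive_continuous phi). unfold phi. auto_derive.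
      pose proof (pow2_ge_0 ((x + - m) * / s)). simpl in *. lra. }
  assert (Hle : RInt (gauss m v) a b <= RInt phi a b).
  { apply RInt_le; auto.
    - apply (ex_RInt_continuous (gauss m v)); intros; apply gauss_continuous; auto.
    - eexists; eauto.
    - intros x _. unfold gauss, phi.
      set (y := (x - m) ^ 2 / (2 * v)).
      assert (Hy : 0 <= y) by (apply Rdiv_le_0_compat; [apply pow2_ge_0|lra]).
      replace (((x - m) / s) ^ 2) with y by (unfold y; rewrite <- Hs2; field; lra).
      replace (- (x - m) ^ 2 / (2 * v)) with (- y) by (unfold y; field; lra).
      rewrite exp_Ropp. unfold Rdiv. rewrite Rmult_comm. fold k.
      apply Rmult_le_compat_l; [lra|]. apply Rinv_le_contravar; [lra|].
      apply exp_ineq1_le. }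
  rewrite (is_RInt_unique _ _ _ _ HI) in Hle.
  unfold minus, plus, opp, Phi in Hle; simpl in Hle.
  pose proof (atan_bound ((b - m) / s)). pose proof (atan_bound ((a - m) / s)).
  assert (k * s * (atan ((b - m) / s) - atan ((a - m) / s)) <= k * s * PI)
    by (apply Rmult_le_compat_l; nra).
  lra.
Qed.

Lemma RInt_le_gauss_mass (phi : R -> R) c m v a b : 0 < v -> 0 <= c -> a <= b ->
  (forall x, continuous phi x) -> (forall x, phi x <= c * gauss m v x) ->
  RInt phi a b <= c * sqrt PI.
Proof.
  intros Hv Hc Hab Hphi Hdom.
  assert (Hg : forall x, continuous (gauss m v) x) by (intros; apply gauss_continuous; auto).
  eapply Rle_trans.
  - apply (RInt_le phi (fun x => c * gauss m v x)); auto.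
    + apply (ex_RInt_continuous (V := R_CompleteNormedModule)); auto.
    + apply (ex_RInt_continuous (V := R_CompleteNormedModule)); intros.
      apply (@continuous_mult _ R_AbsRing); auto. apply continuous_const.
  - rewrite (RInt_scal (V := R_CompleteNormedModule));
      [|apply (ex_RInt_continuous (V := R_CompleteNormedModule)); auto].
    apply Rmult_le_compat_l; auto. apply RInt_gauss_le; auto.
Qed.

Lemma RInt_sym_cv_of_gauss_dom (phi : R -> R) c m v : 0 < v -> 0 <= c ->
  (forall x, continuous phi x) -> (forall x, 0 <= phi x <= c * gauss m v x) ->
  exists l, Un_cv (fun n => RInt phi (- INR n) (INR n)) l.
Proof.
  intros Hv Hc Hphi Hdom.
  destruct (growing_cv (fun n => RInt phi (- INR n) (INR n))) as [l Hl].
  - apply RInt_sym_growing; auto. intros; apply Hdom.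
  - exists (c * sqrt PI). intros y [n ->].
    pose proof (pos_INR n). apply (RInt_le_gauss_mass phi c m v); auto; [lra|].
    intros; apply Hdom.
  - exists l; exact Hl.
Qed.

(* Write [f1 - f2 = h - d * gauss] with [0 <= h <= 2 d gauss]: both truncated
   integrals are monotone and bounded, so the truncated integrals of [f1 - f2]
   converge. *)
Lemma Iline_dist_le (f1 f2 : R -> R) m v d : 0 < v ->
  (forall x, continuous f1 x) -> (forall x, continuous f2 x) ->
  (forall x, Rabs (f1 x - f2 x) <= d * gauss m v x) ->
  Rabs (Iline f1 - Iline f2) <= d * sqrt PI.
Proof.
  intros Hv H1 H2 Hdom.
  set (g := gauss m v) in *.
  assert (Hg : forall x, continuous g x) by (intros; apply gauss_continuous; auto).
  assert (Hgp : forall x, 0 < g x) by (intros; apply gauss_pos; auto).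
  assert (Hd : 0 <= d).
  { pose proof (Rabs_pos (f1 0 - f2 0)). specialize (Hdom 0). specialize (Hgp 0).
    apply (Rmult_le_reg_r (g 0)); lra. }
  assert (Hex : forall (f : R -> R) a b, (forall x, continuous f x) -> ex_RInt f a b)
    by (intros; apply (ex_RInt_continuous (V := R_CompleteNormedModule)); auto).
  assert (Hsub : forall x, continuous (fun y => f1 y - f2 y) x)
    by (intros; apply (@continuous_minus _ _ R_NormedModule); auto).
  assert (Hdg : forall x, continuous (fun y => d * g y) x)
    by (intros; apply (@continuous_mult _ R_AbsRing); auto; apply continuous_const).
  assert (HRint : forall (f : R -> R) n, (forall x, continuous f x) ->
            Rint f (- INR n) (INR n) = RInt f (- INR n) (INR n))
    by (intros; apply Rint_RInt, Hex; auto).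
  apply Iline_dist_le_of_cv.
  - intros n. rewrite !HRint by auto. pose proof (pos_INR n).
    rewrite <- (RInt_minus (V := R_CompleteNormedModule)) by auto.
    eapply Rle_trans; [apply abs_RInt_le; auto; lra|].
    apply (RInt_le_gauss_mass _ d m v); auto; [lra|].
    intros x. apply (continuous_comp _ Rabs); [apply Hsub|apply continuous_Rabs].
  - set (h := fun x => f1 x - f2 x + d * g x).
    assert (Hh : forall x, continuous h x)
      by (intros; apply (@continuous_plus _ _ R_NormedModule); auto).
    destruct (RInt_sym_cv_of_gauss_dom h (2 * d) m v) as [le Hle]; auto.
    { lra. }
    { intros x. unfold h. specialize (Hdom x). apply Rabs_le_between in Hdom. fold g. lra. }
    destruct (RInt_sym_cv_of_gauss_dom g 1 m v) as [lg Hlg]; auto.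
    { lra. }
    { intros x. specialize (Hgp x). fold g. lra. }
    exists (le - d * lg).
    apply (Un_cv_ext (fun n => RInt h (- INR n) (INR n) - d * RInt g (- INR n) (INR n))).
    + intros n. rewrite !HRint by auto. unfold h.
      rewrite (RInt_plus (V := R_CompleteNormedModule)), (RInt_minus (V := R_CompleteNormedModule)),
        (RInt_scal (V := R_CompleteNormedModule)); auto.
      unfold minus, plus, opp, scal; simpl; unfold mult; simpl; ring.
    + apply CV_minus; auto. apply (CV_mult (fun _ => d)); auto.
      intros eps Heps. exists 0%nat. intros. unfold R_dist. rewrite Rminus_diag, Rabs_R0. lra.
Qed.

Lemma lipschitz_plus f g Lf Lg : lipschitz f Lf -> lipschitz g Lg ->
  lipschitz (fun x => f x + g x) (Lf + Lg).
Proof.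
  intros Hf Hg x y. specialize (Hf x y). specialize (Hg x y).
  replace (f x + g x - (f y + g y)) with ((f x - f y) + (g x - g y)) by ring.
  eapply Rle_trans; [apply Rabs_triang|]. lra.
Qed.

Lemma lipschitz_affine a b : lipschitz (fun x => a * x + b) (Rabs a).
Proof.
  intros x y. replace (a * x + b - (a * y + b)) with (a * (x - y)) by ring.
  rewrite Rabs_mult. lra.
Qed.

Lemma Iline_weighted_dist_le (h1 h2 : R -> R) L1 L2 m v d : 0 < v ->
  lipschitz h1 L1 -> lipschitz h2 L2 -> (forall x, Rabs (h1 x - h2 x) <= d) ->
  Rabs (Iline (fun x => h1 x * gauss m v x) - Iline (fun x => h2 x * gauss m v x))
    <= d * sqrt PI.
Proof.
  intros Hv H1 H2 Hd. apply (Iline_dist_le _ _ m v).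
  - auto.
  - intros x. apply (@continuous_mult _ R_AbsRing).
    + eapply lipschitz_continuous, H1.
    + apply gauss_continuous; auto.
  - intros x. apply (@continuous_mult _ R_AbsRing).
    + eapply lipschitz_continuous, H2.
    + apply gauss_continuous; auto.
  - intros x. rewrite <- Rmult_minus_distr_r, Rabs_mult.
    pose proof (gauss_pos m v x Hv). rewrite (Rabs_right (gauss m v x)) by lra.
    apply Rmult_le_compat_r; auto; lra.
Qed.

Section Expectation.
Variable M : model.
Hypothesis Hvar_xi : 0 < var_xi M.
Hypothesis HsJ : 0 < sJ M ^ 2.

Definition jump_mean (h : R -> R) (x : R) : R :=
  Iline (fun j => h (x + j) * gauss (muJ M) (sJ M ^ 2) j).

Lemma jump_mean_dist_le h1 h2 L1 L2 d : lipschitz h1 L1 -> lipschitz h2 L2 ->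
  (forall z, Rabs (h1 z - h2 z) <= d) ->
  forall x, Rabs (jump_mean h1 x - jump_mean h2 x) <= d * sqrt PI.
Proof.
  intros H1 H2 Hd x. apply (Iline_weighted_dist_le _ _ L1 L2); auto;
    apply lipschitz_shift; auto.
Qed.

Lemma jump_mean_lipschitz h L : lipschitz h L -> lipschitz (jump_mean h) (L * sqrt PI).
Proof.
  intros H x y. rewrite Rmult_assoc, (Rmult_comm (sqrt PI)), <- Rmult_assoc.
  apply (Iline_weighted_dist_le _ _ L L); auto; try apply lipschitz_shift; auto.
  intros j. replace (x - y) with (x + j - (y + j)) by ring. apply H.
Qed.

Definition ez_const : R := Rabs (1 - lJ M) * sqrt PI + Rabs (lJ M) * (sqrt PI * sqrt PI).

Lemma ez_const_nonneg : 0 <= ez_const.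
Proof.
  unfold ez_const. pose proof (sqrt_pos PI).
  pose proof (Rabs_pos (1 - lJ M)). pose proof (Rabs_pos (lJ M)).
  apply Rplus_le_le_0_compat; repeat apply Rmult_le_pos; auto.
Qed.

Lemma EZ_dist_le h1 h2 L1 L2 d : lipschitz h1 L1 -> lipschitz h2 L2 ->
  (forall z, Rabs (h1 z - h2 z) <= d) -> Rabs (EZ M h1 - EZ M h2) <= d * ez_const.
Proof.
  intros H1 H2 Hd. unfold EZ.
  assert (Hdiff : Rabs (Iline (fun x => h1 x * gauss 0 (var_xi M) x)
                        - Iline (fun x => h2 x * gauss 0 (var_xi M) x)) <= d * sqrt PI)
    by (apply (Iline_weighted_dist_le _ _ L1 L2); auto).
  assert (Hjump : Rabs (Iline (fun x => jump_mean h1 x * gauss 0 (var_xi M) x)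
                        - Iline (fun x => jump_mean h2 x * gauss 0 (var_xi M) x))
                  <= d * sqrt PI * sqrt PI).
  { apply (Iline_weighted_dist_le _ _ (L1 * sqrt PI) (L2 * sqrt PI)); auto.
    - apply jump_mean_lipschitz; auto.
    - apply jump_mean_lipschitz; auto.
    - apply (jump_mean_dist_le _ _ L1 L2); auto. }
  assert (Hcomm : forall h, Iline (fun x => gauss 0 (var_xi M) x *
             Iline (fun j => h (x + j) * gauss (muJ M) (sJ M ^ 2) j))
           = Iline (fun x => jump_mean h x * gauss 0 (var_xi M) x)).
  { intros h. f_equal. apply functional_extensionality. intros x.
    unfold jump_mean. ring. }
  rewrite !Hcomm.
  set (I1 := Iline (fun x => h1 x * _)) in *.
  set (I2 := Iline (fun x => h2 x * _)) in *.
  set (J1 := Iline (fun x => jump_mean h1 x * _)) in *.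
  set (J2 := Iline (fun x => jump_mean h2 x * _)) in *.
  replace ((1 - lJ M) * I1 + lJ M * J1 - ((1 - lJ M) * I2 + lJ M * J2))
    with ((1 - lJ M) * (I1 - I2) + lJ M * (J1 - J2)) by ring.
  eapply Rle_trans; [apply Rabs_triang|]. rewrite !Rabs_mult. unfold ez_const.
  pose proof (Rabs_pos (1 - lJ M)). pose proof (Rabs_pos (lJ M)).
  apply Rmult_le_compat_l with (r := Rabs (1 - lJ M)) in Hdiff; auto.
  apply Rmult_le_compat_l with (r := Rabs (lJ M)) in Hjump; auto.
  nra.
Qed.

Definition rho_const (lam a : R) : R := Rabs (1 - lam) + Rabs lam * Rabs (/ (1 - a)).

Lemma rho_const_nonneg lam a : 0 <= rho_const lam a.
Proof.
  unfold rho_const. pose proof (Rabs_pos (1 - lam)). pose proof (Rabs_pos lam).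
  pose proof (Rabs_pos (/ (1 - a))). nra.
Qed.

Lemma CVaR_dist_le a h1 h2 L1 L2 d : lipschitz h1 L1 -> lipschitz h2 L2 ->
  (forall z, Rabs (h1 z - h2 z) <= d) ->
  Rabs (CVaR M a h1 - CVaR M a h2) <= Rabs (/ (1 - a)) * (d * ez_const).
Proof.
  intros H1 H2 Hd.
  assert (Hd0 : 0 <= d) by (specialize (Hd 0); pose proof (Rabs_pos (h1 0 - h2 0)); lra).
  assert (Hu : forall u, Rabs (/ (1 - a) * EZ M (fun z => Rmax (h1 z - u) 0)
                             - / (1 - a) * EZ M (fun z => Rmax (h2 z - u) 0))
                         <= Rabs (/ (1 - a)) * (d * ez_const)).
  { intros u. rewrite <- Rmult_minus_distr_l, Rabs_mult.
    apply Rmult_le_compat_l; [apply Rabs_pos|].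
    apply (EZ_dist_le _ _ L1 L2); try apply lipschitz_excess; auto.
    intros z. eapply Rle_trans; [apply Rmax0_dist_le|].
    replace (h1 z - u - (h2 z - u)) with (h1 z - h2 z) by ring. apply Hd. }
  pose proof ez_const_nonneg. pose proof (Rabs_pos (/ (1 - a))).
  unfold CVaR. apply Rinf_dist_le.
  - repeat apply Rmult_le_pos; auto.
  - eexists; exists 0; reflexivity.
  - eexists; exists 0; reflexivity.
  - intros w [u ->]. eexists; split; [exists u; reflexivity|].
    specialize (Hu u). apply Rabs_le_between in Hu. lra.
  - intros w [u ->]. eexists; split; [exists u; reflexivity|].
    specialize (Hu u). apply Rabs_le_between in Hu. lra.
Qed.

Lemma rho_dist_le lam a h1 h2 L1 L2 d : lipschitz h1 L1 -> lipschitz h2 L2 ->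
  (forall z, Rabs (h1 z - h2 z) <= d) ->
  Rabs (rho M lam a h1 - rho M lam a h2) <= rho_const lam a * (d * ez_const).
Proof.
  intros H1 H2 Hd. unfold rho.
  pose proof (EZ_dist_le _ _ _ _ _ H1 H2 Hd) as HE.
  pose proof (CVaR_dist_le a _ _ _ _ _ H1 H2 Hd) as HC.
  replace ((1 - lam) * EZ M h1 + lam * CVaR M a h1 - ((1 - lam) * EZ M h2 + lam * CVaR M a h2))
    with ((1 - lam) * (EZ M h1 - EZ M h2) + lam * (CVaR M a h1 - CVaR M a h2)) by ring.
  eapply Rle_trans; [apply Rabs_triang|]. rewrite !Rabs_mult. unfold rho_const.
  pose proof (Rabs_pos (1 - lam)). pose proof (Rabs_pos lam).
  apply Rmult_le_compat_l with (r := Rabs (1 - lam)) in HE; auto.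
  apply Rmult_le_compat_l with (r := Rabs lam) in HC; auto.
  nra.
Qed.

Lemma rho_shift_lipschitz lam a F L e c : lipschitz F L -> 0 <= e ->
  lipschitz (fun p => rho M lam a (fun z => F (p * e + c + z)))
            (rho_const lam a * (L * e * ez_const)).
Proof.
  intros HF He p q.
  replace (rho_const lam a * (L * e * ez_const) * Rabs (p - q))
    with (rho_const lam a * ((L * e * Rabs (p - q)) * ez_const)) by ring.
  apply (rho_dist_le _ _ _ _ L L); try apply lipschitz_shift; auto.
  intros z.
  eapply Rle_trans; [apply HF|].
  replace (p * e + c + z - (q * e + c + z)) with ((p - q) * e) by ring.
  rewrite Rabs_mult, (Rabs_right e) by lra. lra.
Qed.

End Expectation.

Lemma var_xi_pos M : 0 < kY M -> 0 < sY M -> 0 < var_xi M.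
Proof.
  intros Hk Hs. unfold var_xi. apply Rdiv_lt_0_compat; [|lra].
  apply Rmult_lt_0_compat; [apply pow_lt; lra|].
  assert (exp (-2 * kY M) < 1) by (rewrite <- exp_0; apply exp_increasing; lra).
  lra.
Qed.

Section ValueFunction.
Variable M : model.
Variables lam alp : nat -> R.
Variable Lg : R.
Hypothesis Hvar_xi : 0 < var_xi M.
Hypothesis HsJ : 0 < sJ M ^ 2.
Hypothesis Hxmax : 0 < xmax M.
Hypothesis HgY : lipschitz (gY M) Lg.

Lemma Vn_terminal_lipschitz :
  exists L, forall r, 0 <= r <= Rcap M -> lipschitz (Vn M lam alp 0 r) L.
Proof.
  set (S0 := Rabs (Rmin (Rinit M + INR (T M) * xmax M) (Rcap M)) + Rcap M).
  set (e := exp (- kY M)).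
  set (K := rho_const (lam (T M)) (alp (T M))).
  exists (K * (Lg * S0 * Rabs (pref M) * e * ez_const M)).
  intros r Hr. cbn [Vn]. set (s := shortage M r).
  assert (Hs : Rabs s <= S0).
  { unfold s, shortage, S0. eapply Rle_trans; [apply Rabs_triang|].
    rewrite Rabs_Ropp, (Rabs_right r) by lra. lra. }
  assert (HF : lipschitz (fun y => (1 + gh M * s + gY M y) * s * pref M)
                         (Lg * Rabs s * Rabs (pref M))).
  { intros y1 y2.
    replace ((1 + gh M * s + gY M y1) * s * pref M - (1 + gh M * s + gY M y2) * s * pref M)
      with ((gY M y1 - gY M y2) * (s * pref M)) by ring.
    rewrite Rabs_mult, Rabs_mult.
    pose proof (Rabs_pos s). pose proof (Rabs_pos (pref M)).
    specialize (HgY y1 y2). pose proof (Rabs_pos (y1 - y2)).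
    assert (0 <= Rabs s * Rabs (pref M)) by (apply Rmult_le_pos; auto). nra. }
  eapply lipschitz_le.
  - apply (rho_shift_lipschitz M Hvar_xi HsJ _ _ _ _ e _ HF). left; apply exp_pos.
  - pose proof (lipschitz_nonneg _ _ HgY). pose proof (exp_pos (- kY M)).
    pose proof (rho_const_nonneg (lam (T M)) (alp (T M))).
    pose proof (ez_const_nonneg M). pose proof (Rabs_pos (pref M)).
    assert (0 <= Lg * Rabs (pref M) * e * ez_const M)
      by (repeat apply Rmult_le_pos; auto; left; auto).
    apply Rmult_le_compat_l; auto. nra.
Qed.

Lemma Vn_lipschitz k :
  exists L, forall r, 0 <= r <= Rcap M -> lipschitz (Vn M lam alp k r) L.
Proof.
  induction k as [|k [L HL]]; [apply Vn_terminal_lipschitz|].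
  set (t := (T M - S k)%nat).
  exists (xmax M + rho_const (lam t) (alp t) * (L * exp (- kY M) * ez_const M)).
  intros r Hr. cbn [Vn]. fold t.
  apply (Rinf_lipschitz (fun x => 0 <= x <= Rmin (Rcap M - r) (xmax M))
    (fun p x => x * p - cf M + rho M (lam t) (alp t)
                  (fun z => Vn M lam alp k (r + x) (p * exp (- kY M) + adet M t + z)))).
  - exists 0. split; [lra|]. apply Rmin_glb; lra.
  - intros x Hx.
    pose proof (Rmin_l (Rcap M - r) (xmax M)). pose proof (Rmin_r (Rcap M - r) (xmax M)).
    apply lipschitz_plus.
    + eapply lipschitz_le; [apply lipschitz_affine|]. rewrite Rabs_right; lra.
    + apply rho_shift_lipschitz; auto; [|left; apply exp_pos].
      apply HL. lra.
Qed.

End ValueFunction.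

Theorem lemma1 (M : model)
  (HT : (1 <= T M)%nat)
  (HRmax : 0 < Rcap M) (Hxmax : 0 < xmax M)
  (HR0 : 0 <= Rinit M <= Rcap M)
  (Hpref : 0 < pref M) (Hgh : 0 <= gh M)
  (HkY : 0 < kY M) (HsY : 0 < sY M)
  (HlJ : 0 < lJ M < 1) (HsJ : 0 < sJ M)
  (* Assumption 1 *)
  (HgY_pos : forall y, 0 < gY M y)
  (HgY_incr : forall y1 y2, y1 < y2 -> gY M y1 < gY M y2)
  (HgY_lip : exists L, L <= / pref M * exp (2 * kY M) /\
                 forall y1 y2, Rabs (gY M y1 - gY M y2) <= L * Rabs (y1 - y2))
  (* risk-aversion vector beta = (lam 0, alp 0, ..., lam T, alp T) *)
  (lam alp : nat -> R)
  (Hlam : forall s, (s <= T M)%nat -> 0 <= lam s <= 1)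
  (Halp : forall s, (s <= T M)%nat -> 0 < alp s < 1)
  (t : nat) (Ht : (t <= T M)%nat)
  (r : R) (Hr : 0 <= r <= Rcap M) :
  exists L : R, forall p q : R,
    Rabs (V M lam alp t r p - V M lam alp t r q) <= L * Rabs (p - q).
Proof.
  destruct HgY_lip as [Lg [_ HLg]].
  destruct (Vn_lipschitz M lam alp Lg (var_xi_pos M HkY HsY)
              ltac:(apply pow_lt; lra) Hxmax HLg (T M - t)) as [L HL].
  exists L. apply HL, Hr.
Qed.
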